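(* Let $G$ be a graph and let $\{A,B\}$ be a near partition of $V(G)$ (i.e. $A\cap B=\emptyset$, $A\cup B=V(G)$, with $A$ or $B$ possibly empty). Then $$\mathrm{cmp}(G)\le \max\{\mathrm{cmp}(G[A]),\mathrm{cmp}(G[B])\}+|N_G(B)|.$$
   Context: All graphs are finite and simple. $G[X]$ is the induced subgraph on $X$, and $N_G(X)$ is the set of vertices outside $X$ having a neighbor in $X$. A forest decomposition of a graph $G$ is a pair $(F,(W_x)_{x\in V(F)})$ where $F$ is a forest and $W_x\subseteq V(G)$, such that (1) for every vertex $u$ of $G$, $\{x\in V(F)\mid u\in W_x\}$ induces a nonempty connected subgraph of $F$, and (2) every edge $uv$ of $G$ has both ends in some bag $W_x$. Its width is the maximum size of a bag minus one. It is suitable if additionally (3) $F$ is a subgraph of $G$ with $V(F)=V(G)$, and (4) $u\in W_u$ for every $u\in V(G)$. Every graph has a suitable forest decomposition. The complexity $\mathrm{cmp}(G)$ is the minimum width of a suitable forest decomposition of $G$, with the convention $\mathrm{cmp}(G)=0$ if $G$ has no vertices. *)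

(* graphs are symmetric irreflexive relations on a finType. *)
From mathcomp Require Import all_boot all_order.
From mathcomp Require Import boolp.
Set Implicit Arguments. Unset Strict Implicit. Unset Printing Implicit Defensive.

Section Graphs.
Variable T : finType.

Definition sub_rel (r : rel T) (V : {set T}) : rel T :=
  [rel x y | [&& x \in V, y \in V & r x y]].

Definition is_forest (f : rel T) : Prop :=
  ~ exists s : seq T, [&& uniq s, 2 < size s & cycle f s].

(* The forest F has
   vertex set V and edge relation f; the bag of node x is W x. *)
Definition suitable_fd (e : rel T) (V : {set T}) (f : rel T)
    (W : T -> {set T}) : Prop :=
  symmetric f /\ irreflexive f /\
      (forall x y, f x y -> [&& x \in V, y \in V & e x y]) /\
      is_forest f /\
      (forall x, x \in V -> W x \subset V) /\
      (forall u, u \in V ->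
         ([set x in V | u \in W x] != set0 /\
         (forall x y, x \in [set x in V | u \in W x] -> y \in [set x in V | u \in W x] ->
            connect (sub_rel f [set x in V | u \in W x]) x y))) /\
      (forall u v, u \in V -> v \in V -> e u v ->
         exists2 x, x \in V & (u \in W x) && (v \in W x)) /\
      (forall u, u \in V -> u \in W u).

(* width = max bag size minus one (0 for the empty graph) *)
Definition fd_width (V : {set T}) (W : T -> {set T}) : nat :=
  (\max_(x in V) #|W x|).-1.

Definition has_sfd (e : rel T) (V : {set T}) (k : nat) : Prop :=
  exists f W, suitable_fd e V f W /\ fd_width V W <= k.

Lemma has_sfd_bool (e : rel T) (V : {set T}) :
  (exists k, has_sfd e V k) -> exists k, `[< has_sfd e V k >].
Proof. by case=> k hk; exists k; apply/asboolP. Qed.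

(* cmp(G[V]) : minimum width of a suitable forest decomposition.
   (Such a decomposition always exists; the fallback 0 is never used.) *)
Definition cmp (e : rel T) (V : {set T}) : nat :=
  match pselect (exists k, has_sfd e V k) with
  | left h => ex_minn (has_sfd_bool h)
  | right _ => 0
  end.

Definition nbhd (e : rel T) (B : {set T}) : {set T} :=
  [set v | (v \notin B) && [exists u in B, e u v]].

End Graphs.

From mathcomp Require Import all_boot.
From mathcomp Require Import boolp.
Set Implicit Arguments. Unset Strict Implicit. Unset Printing Implicit Defensive.

(* Take optimal suitable forest decompositions of G[A] and G[B]; side by side
   they decompose G with the A-B edges removed.  Extend the union of their
   forests to a spanning forest F of G and add to every bag the vertices of
   N = N_G(B) lying in its F-component.  Every A-B edge has its A-end in N, so
   it lies in the bag of its B-end; a vertex of N now occupies exactly its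
   F-component, which is connected; and every bag grows by at most |N|. *)

Section Forests.
Variable T : finType.
Implicit Types (e F : rel T) (x y u v : T).

Definition add_edge F x y : rel T :=
  [rel u v | F u v || ((u == x) && (v == y)) || ((u == y) && (v == x))].

Lemma add_edge_sym F x y : symmetric F -> symmetric (add_edge F x y).
Proof.
move=> sF u v; rewrite /add_edge /= sF -orbA [(v == x) && _]andbC.
by rewrite [(v == y) && _]andbC [(_ && _) || _]orbC orbA.
Qed.

Lemma sub_add_edge F x y : subrel F (add_edge F x y).
Proof. by move=> u v Fuv; rewrite /add_edge /= Fuv. Qed.

Lemma add_edge_forest F x y :
  symmetric F -> is_forest F -> ~~ connect F x y -> is_forest (add_edge F x y).
Proof.
move=> sF forestF nFxy [s /and3P [uniq_s size_s cycle_s]].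
have off_x : {in [pred z | z != x] &, subrel (add_edge F x y) F}.
  by move=> u w /negPf ux /negPf wx; rewrite /add_edge /= ux wx andbF !orbF.
have [x_s | x_s] := boolP (x \in s); last first.
  apply: forestF; exists s; rewrite uniq_s size_s (sub_in_cycle off_x) //.
  by apply/allP => z z_s; apply: contraNneq x_s => <-.
(* Rotate the cycle to start at x.  If neither of its edges at x is the new
   edge, it is a cycle of F; otherwise the rest of it is an F-path joining x
   and y. *)
case/rot_to: x_s => i [|h [|t0 t]] rot_s;
  try by move: size_s; rewrite -(size_rot i) rot_s.
move: uniq_s cycle_s; rewrite -(rot_uniq i) -(rot_cycle i) rot_s.
set l := last t0 t; set c := [:: x, h, t0 & t].
move=> uniq_c; rewrite /= rcons_path => /and4P [rxh rht0 rht rlx].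
have /andP [x_ht /andP [h_t _]] := uniq_c.
have l_t : l \in t0 :: t := mem_last t0 t.
have xh : h != x by apply: contraNneq x_ht => ->; exact: mem_head.
have xl : l != x by apply: contraNneq x_ht => <-; rewrite inE l_t orbT.
have hl : l != h by apply: contraNneq h_t => <-.
have Fht : path F h (t0 :: t).
  apply: (sub_in_path off_x); last by rewrite /= rht0 rht.
  by apply/allP => z z_c; apply: contraNneq x_ht => <-.
have Fhl : connect F h l by apply/connectP; exists (t0 :: t).
move: rxh rlx; rewrite /add_edge /= (negPf xh) (negPf xl) eqxx andbF andbT /= !orbF.
move=> /orP [Fxh | /eqP yh] /orP [Flx | /eqP yl].
- apply: forestF; exists c; rewrite uniq_c /= rcons_path Fxh Flx.
  by rewrite andbT; exact: Fht.
- by case/negP: nFxy; rewrite -yl (connect_trans (connect1 Fxh)).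
- case/negP: nFxy; rewrite (sym_connect_sym sF) -yh.
  by rewrite (connect_trans Fhl (connect1 Flx)).
- by move: hl; rewrite /l yl yh eqxx.
Qed.

Definition spanning_forest e F : Prop :=
  [/\ symmetric F, is_forest F, subrel F e & subrel e (connect F)].

Lemma spanning_forest_ext e F0 :
  symmetric e -> symmetric F0 -> is_forest F0 -> subrel F0 e ->
  exists2 F, subrel F0 F & spanning_forest e F.
Proof.
move=> se sF0 forestF0 F0e.
pose gaps F := [set p : T * T | e p.1 p.2 && ~~ connect F p.1 p.2].
suff: forall n F, #|gaps F| < n -> symmetric F -> is_forest F -> subrel F e ->
    exists2 F', subrel F F' & spanning_forest e F'.
  by move=> /(_ _ F0 (ltnSn _)); apply.
elim=> [//|n IHn] F lt_gaps sF forestF Fe.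
have [no_gaps | [[x y]]] := set_0Vmem (gaps F).
  exists F => //; split=> // x y exy; apply: contraT => nFxy.
  by rewrite -(in_set0 (x, y)) -no_gaps inE /= exy.
rewrite inE /= => /andP [exy nFxy].
have lt_gaps' : #|gaps (add_edge F x y)| < #|gaps F|.
  apply/proper_card/properP; split.
    apply/subsetP => -[a b]; rewrite !inE /= => /andP [-> /=]; apply: contra.
    by apply: connect_sub => u v /sub_add_edge /connect1.
  exists (x, y); rewrite !inE /= ?exy ?nFxy //.
  by apply/negPn/connect1; rewrite /add_edge /= !eqxx orbT.
have [||||F' FF' spanF'] := IHn (add_edge F x y).
- by apply: leq_trans lt_gaps' _; rewrite -ltnS.
- exact: add_edge_sym.
- exact: add_edge_forest.
- move=> u v /orP [/orP [/Fe // | /andP [/eqP -> /eqP ->] //] |].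
  by case/andP => /eqP -> /eqP ->; rewrite se.
by exists F' => // u v /sub_add_edge /FF'.
Qed.

End Forests.

Section Decompositions.
Variable T : finType.
Implicit Types (e f g F : rel T) (A V X S : {set T}) (W : T -> {set T}) (x y u v : T).

Lemma is_forest_relU_sides e f g A :
  subrel f (sub_rel e A) -> subrel g (sub_rel e (~: A)) ->
  is_forest f -> is_forest g -> is_forest (relU f g).
Proof.
move=> fA gA forest_f forest_g [[|a s] // /and3P [uniq_s size_s cycle_s]].
have sides : closed (relU f g) A.
  move=> x y /orP [/fA | /gA] /and3P [xA yA _]; first by rewrite xA yA.
  by move: xA yA; rewrite !inE => /negPf -> /negPf ->.
have same_side z : z \in a :: s -> (z \in A) = (a \in A).
  move: cycle_s; rewrite /= rcons_path => /andP [/path_connect conn _] /conn.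
  by move/(closed_connect sides) ->.
have [aA | aA] := boolP (a \in A).
  apply: forest_f; exists (a :: s); rewrite uniq_s size_s.
  apply: (sub_in_cycle (P := [pred z | z \in A])) cycle_s; last first.
    by apply/allP => z /same_side /= ->.
  by move=> x y _ /= yA /orP [// | /gA /and3P [_]]; rewrite inE yA.
apply: forest_g; exists (a :: s); rewrite uniq_s size_s.
apply: (sub_in_cycle (P := [pred z | z \notin A])) cycle_s; last first.
  by apply/allP => z /same_side /= ->.
by move=> x y _ /= /negPf yA /orP [/fA /and3P [_] | //]; rewrite yA.
Qed.

Definition bag_nodes V W u := [set x in V | u \in W x].

Definition connected_in f S :=
  forall x y, x \in S -> y \in S -> connect (sub_rel f S) x y.

(* [suitable_fd] as a record; the nonemptiness part of condition (1) is
   omitted since it follows from (4). *)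
Record sfd_spec e V f W : Prop := SfdSpec {
  sfd_sym : symmetric f;
  sfd_irr : irreflexive f;
  sfd_sub : subrel f (sub_rel e V);
  sfd_forest : is_forest f;
  sfd_bags : forall x, x \in V -> W x \subset V;
  sfd_subtree : forall u, u \in V -> connected_in f (bag_nodes V W u);
  sfd_edge : forall u v, u \in V -> v \in V -> e u v ->
    exists2 x, x \in V & (u \in W x) && (v \in W x);
  sfd_self : forall u, u \in V -> u \in W u }.

Lemma suitable_fdP e V f W : suitable_fd e V f W <-> sfd_spec e V f W.
Proof.
split=> [[? [? [? [? [? [subtree [? ?]]]]]]] | [? ? ? ? ? subtree ? self]].
  by constructor=> // u /subtree [].
do 5 (split=> //); split=> [u uV|//]; split; last exact: subtree.
by apply/set0Pn; exists u; rewrite inE uV self.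
Qed.

Lemma connected_in_sub f g S : subrel f g -> connected_in f S -> connected_in g S.
Proof.
move=> fg conn x y xS yS.
apply: connect_sub (conn x y xS yS) => a b /and3P [aS bS fab].
by apply: connect1; rewrite /sub_rel /= aS bS fg.
Qed.

Lemma connected_in_component F u :
  symmetric F -> connected_in F [set z | connect F z u].
Proof.
move=> sF x y; rewrite !inE => xu yu.
have /connectP [p Fp ->] : connect F x y.
  by rewrite (connect_trans xu) // (sym_connect_sym sF).
apply/connectP; exists p => //.
apply: (sub_in_path (P := [pred z | connect F z u]) (e := F)).
- by move=> a b; rewrite /sub_rel /= !inE => -> -> ->.
- apply/allP => z /(path_connect Fp) xz.
  by rewrite /= (connect_trans _ xu) // (sym_connect_sym sF).
- exact: Fp.
Qed.

Lemma mem_connect e F V x y :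
  subrel F (sub_rel e V) -> y \in V -> connect F x y -> x \in V.
Proof.
move=> FV yV /connectP [[|z p] /= Fp y_last]; first by rewrite y_last in yV.
by case/andP: Fp => /FV /and3P [].
Qed.

Lemma sfd_bag_connect e V f W x u :
  sfd_spec e V f W -> x \in V -> u \in W x -> connect f x u.
Proof.
move=> sfd xV uWx; have uV : u \in V := subsetP (sfd_bags sfd xV) u uWx.
apply: connect_sub (sfd_subtree sfd uV _ _) => [a b /and3P [_ _ /connect1] //||].
  by rewrite inE xV.
by rewrite inE uV (sfd_self sfd uV).
Qed.

Lemma card_bag_le_width V W x : x \in V -> #|W x| <= (fd_width V W).+1.
Proof. by move=> xV; apply: leq_trans (leqSpred _); exact: leq_bigmax_cond. Qed.

Lemma fd_width_le V W k : (forall x, x \in V -> #|W x| <= k.+1) -> fd_width V W <= k.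
Proof. by move=> le_k; rewrite /fd_width -subn1 leq_subLR add1n; apply/bigmax_leqP. Qed.

Section Join.
Variables (e fA fB : rel T) (A : {set T}) (WA WB : T -> {set T}).
Hypotheses (sfdA : sfd_spec e A fA WA) (sfdB : sfd_spec e (~: A) fB WB).

Definition join_bags z := if z \in A then WA z else WB z.

Lemma bag_nodes_join u :
  bag_nodes setT join_bags u =
    if u \in A then bag_nodes A WA u else bag_nodes (~: A) WB u.
Proof.
apply/setP => z; rewrite /join_bags /bag_nodes.
case zA: (z \in A); case uA: (u \in A); rewrite !inE ?zA //=.
  by apply/negbTE; apply: contraFN uA => /(subsetP (sfd_bags sfdA zA)).
have zB : z \in ~: A by rewrite inE zA.
by apply/negbTE; apply: contraTN uA => /(subsetP (sfd_bags sfdB zB)); rewrite inE.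
Qed.

Lemma sfd_join :
  sfd_spec (relU (sub_rel e A) (sub_rel e (~: A))) setT (relU fA fB) join_bags.
Proof.
constructor.
- by move=> x y /=; rewrite (sfd_sym sfdA) (sfd_sym sfdB).
- by move=> x /=; rewrite (sfd_irr sfdA) (sfd_irr sfdB).
- move=> x y Fxy; rewrite {1}/sub_rel /= !in_setT.
  by case/orP: Fxy => [/(sfd_sub sfdA) | /(sfd_sub sfdB)] ->; rewrite ?orbT.
- exact: is_forest_relU_sides (sfd_sub sfdA) (sfd_sub sfdB)
    (sfd_forest sfdA) (sfd_forest sfdB).
- by move=> x _; apply: subsetT.
- move=> u _; rewrite bag_nodes_join; case: ifP => [uA | /negbT uB].
    by apply: (connected_in_sub _ (sfd_subtree sfdA uA)) => x y /= ->.
  have uB' : u \in ~: A by rewrite inE.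
  by apply: (connected_in_sub _ (sfd_subtree sfdB uB')) => x y /= ->; rewrite orbT.
- move=> u v _ _ /orP [] /and3P [uV vV euv].
    have [x xA uvx] := sfd_edge sfdA uV vV euv.
    by exists x; rewrite // /join_bags xA.
  have [x xB uvx] := sfd_edge sfdB uV vV euv.
  by exists x; rewrite // /join_bags; move: xB; rewrite inE => /negPf ->.
- by move=> u _; rewrite /join_bags; case: ifP => [uA | /negbT uB];
    [exact: (sfd_self sfdA) | apply: (sfd_self sfdB); rewrite inE].
Qed.

Lemma fd_width_join :
  fd_width setT join_bags <= maxn (fd_width A WA) (fd_width (~: A) WB).
Proof.
apply: fd_width_le => x _; rewrite /join_bags; case: ifP => [xA | /negbT xB].
  by apply: leq_trans (card_bag_le_width _ xA) _; rewrite ltnS leq_maxl.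
apply: leq_trans (card_bag_le_width (V := ~: A) _ _) _; first by rewrite inE.
by rewrite ltnS leq_maxr.
Qed.

End Join.

Section Glue.
Variables (e e0 f0 F : rel T) (V X : {set T}) (W0 : T -> {set T}).
Hypotheses (sfd0 : sfd_spec e0 V f0 W0) (irr_e : irreflexive e).
Hypotheses (f0F : subrel f0 F) (spanF : spanning_forest (sub_rel e V) F).
Hypotheses (XV : X \subset V)
  (cover : forall u v, u \in V -> v \in V -> e u v -> [|| e0 u v, u \in X | v \in X]).

Definition glue_bags z := W0 z :|: (X :&: [set y | connect F z y]).

Lemma bag_nodes_glue u : u \in V ->
  bag_nodes V glue_bags u =
    if u \in X then [set z | connect F z u] else bag_nodes V W0 u.
Proof.
have [_ _ FV _] := spanF.
move=> uV; apply/setP => z; rewrite /glue_bags /bag_nodes !inE.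
case: ifP => uX; rewrite /= ?andbF ?orbF ?inE //.
apply/idP/idP => [/andP [zV /orP [/(sfd_bag_connect sfd0 zV) | //]] | zu].
  by apply: connect_sub => a b /f0F /connect1.
by rewrite zu orbT andbT (mem_connect FV uV zu).
Qed.

Lemma sfd_glue : sfd_spec e V F glue_bags.
Proof.
have [sF forestF FV eF] := spanF.
have conn_e u v : u \in V -> v \in V -> e u v -> connect F u v.
  by move=> uV vV euv; apply: eF; rewrite /sub_rel /= uV vV.
constructor=> //.
- by move=> x; apply/negP => /FV /and3P [_ _]; rewrite irr_e.
- move=> x xV; rewrite subUset (sfd_bags sfd0 xV).
  exact: subset_trans (subsetIl _ _) XV.
- move=> u uV; rewrite bag_nodes_glue //; case: ifP => _.
    exact: connected_in_component.
  exact: connected_in_sub f0F (sfd_subtree sfd0 uV).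
- move=> u v uV vV euv; case/or3P: (cover uV vV euv) => [e0uv | uX | vX].
  + have [x xV /andP [ux vx]] := sfd_edge sfd0 uV vV e0uv.
    by exists x; rewrite // !inE ux vx.
  + exists v; rewrite // !inE (sfd_self sfd0 vV) uX andbT.
    by rewrite (sym_connect_sym sF) (conn_e u v) ?orbT.
  + by exists u; rewrite // !inE (sfd_self sfd0 uV) vX (conn_e u v) ?orbT.
- by move=> u uV; rewrite !inE (sfd_self sfd0 uV).
Qed.

Lemma fd_width_glue : fd_width V glue_bags <= fd_width V W0 + #|X|.
Proof.
apply: fd_width_le => x xV; rewrite -addSn.
apply: leq_trans (leq_card_setU _ _) (leq_add (card_bag_le_width _ xV) _).
exact/subset_leq_card/subsetIl.
Qed.

End Glue.

Lemma sub_rel_sym e V : symmetric e -> symmetric (sub_rel e V).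
Proof. by move=> se x y; rewrite /sub_rel /= se andbCA. Qed.

Lemma sfd_discrete V :
  sfd_spec [rel _ _ | false] V [rel _ _ | false] (fun z => [set z]).
Proof.
constructor=> //.
- by move=> [[|a [|b s]] /and3P []].
- by move=> x xV; rewrite sub1set.
- move=> u uV x y; rewrite !inE => /andP [_ /eqP <-] /andP [_ /eqP <-].
  exact: connect0.
- by move=> u _; rewrite set11.
Qed.

Lemma has_sfd_exists e V : symmetric e -> irreflexive e -> exists k, has_sfd e V k.
Proof.
move=> se ie; have sfd0 := sfd_discrete V.
have [|F _ spanF] := spanning_forest_ext (e := sub_rel e V) (sub_rel_sym _ se)
  (sfd_sym sfd0) (sfd_forest sfd0) => //.
pose W := glue_bags F V (fun z => [set z]).
exists (fd_width V W), F, W; split=> //; apply/suitable_fdP.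
by apply: (sfd_glue sfd0 ie _ spanF) => [x y //|//|u v ->].
Qed.

Lemma cmpP e V : symmetric e -> irreflexive e -> has_sfd e V (cmp e V).
Proof.
move=> se ie; rewrite /cmp; case: pselect => [h | []]; last exact: has_sfd_exists.
by case: ex_minnP => k /asboolP.
Qed.

Lemma cmp_min e V k : has_sfd e V k -> cmp e V <= k.
Proof.
move=> hk; rewrite /cmp; case: pselect => [h | []]; last by exists k.
by case: ex_minnP => m _; apply; apply/asboolP.
Qed.

Lemma cross_edge_nbhd e A u v : symmetric e -> e u v ->
  [|| relU (sub_rel e A) (sub_rel e (~: A)) u v, u \in nbhd e (~: A)
    | v \in nbhd e (~: A)].
Proof.
move=> se euv; rewrite /sub_rel /nbhd /= !inE euv !andbT.
case uA: (u \in A); case vA: (v \in A); rewrite //= ?orbF; apply/existsP;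
  [exists v | exists u]; by rewrite !inE ?uA ?vA // se.
Qed.

End Decompositions.

Theorem lemma3p2 (T : finType) (e : rel T) (A B : {set T}) :
  symmetric e -> irreflexive e ->
  A :&: B = set0 -> A :|: B = [set: T] ->
  cmp e [set: T] <= maxn (cmp e A) (cmp e B) + #|nbhd e B|.
Proof.
move=> se ie AB AUB.
have -> : B = ~: A.
  apply/setP => x; move/setP/(_ x): AB; move/setP/(_ x): AUB; rewrite !inE.
  by case: (x \in A); case: (x \in B).
have [fA [WA [/suitable_fdP sfdA wA]]] := cmpP A se ie.
have [fB [WB [/suitable_fdP sfdB wB]]] := cmpP (~: A) se ie.
have sfd0 := sfd_join sfdA sfdB.
have [|F f0F spanF] := spanning_forest_ext (e := sub_rel e setT) (sub_rel_sym _ se)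
  (sfd_sym sfd0) (sfd_forest sfd0).
  by move=> x y /(sfd_sub sfd0) /and3P [xT yT /orP [] /and3P [_ _ exy]];
    rewrite /sub_rel /= xT yT exy.
apply: cmp_min; exists F, (glue_bags F (nbhd e (~: A)) (join_bags A WA WB)).
split.
  apply/suitable_fdP; apply: (sfd_glue sfd0 ie f0F spanF (subsetT _)).
  by move=> u v _ _; apply: cross_edge_nbhd.
apply: leq_trans (fd_width_glue _ _ _ _) _; rewrite leq_add2r.
by apply: leq_trans (fd_width_join _ _ _) _; rewrite geq_max !leq_max wA wB orbT.
Qed.
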